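(* If $G$ and $H$ are Left dead-ends, then $b(G+H)=b(G)+b(H)$.
   Context: Games are finite partizan games; $o(G)$ is the misère outcome class (ordered $\mathscr{L}>\mathscr{N}>\mathscr{R}$, $\mathscr{L}>\mathscr{P}>\mathscr{R}$). A universe is a set of games closed under options, disjunctive sums, conjugates, and forming $\{\mathscr{G}^L\mid\mathscr{G}^R\}$ from nonempty finite subsets of it; $G\geq_\mathcal{U}H$ means $o(G+X)\geq o(H+X)$ for all $X\in\mathcal{U}$. A Left dead-end is a game all of whose subpositions have no Left option. For Left dead-ends, $G\geq H$ means $G\geq_\mathcal{U}H$ for every universe $\mathcal{U}$, and $G=H$ means $G\geq H$ and $H\geq G$. The birthday $b(G)$ of a Left dead-end $G$ is the minimum height of the game tree of a Left dead-end $K$ with $K=G$. *)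

From Stdlib Require List.
From Stdlib Require Import ClassicalEpsilon.
From mathcomp Require Import all_boot.


Set Implicit Arguments.
Unset Strict Implicit.
Unset Printing Implicit Defensive.

Inductive game : Type := Game : seq game -> seq game -> game.

Definition leftOpts (G : game) : seq game := let: Game L _ := G in L.
Definition rightOpts (G : game) : seq game := let: Game _ R := G in R.

Definition is_option (G' G : game) : Prop :=
  List.In G' (leftOpts G) \/ List.In G' (rightOpts G).

(* Disjunctive sum: G + H = {G^L + H, G + H^L | G^R + H, G + H^R}. *)
Fixpoint gadd (G H : game) {struct G} : game :=
  match G with
  | Game GL GR =>
    let fix addH (H : game) : game :=
      match H with
      | Game HL HR =>
        Game (map (fun gl => gadd gl H) GL ++ map addH HL)
             (map (fun gr => gadd gr H) GR ++ map addH HR)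
      end in
    addH H
  end.

Fixpoint gconj (G : game) : game :=
  match G with Game L R => Game (map gconj R) (map gconj L) end.

(* Misere play: a player with no move on their turn wins.
   wins G = (Left wins moving first on G, Right wins moving first on G). *)
Fixpoint wins (G : game) : bool * bool :=
  match G with
  | Game L R =>
    (nilp L || has (fun g => ~~ (wins g).2) L,
     nilp R || has (fun g => ~~ (wins g).1) R)
  end.

Inductive outcome : Type := oL | oN | oP | oR.

Definition misere_outcome (G : game) : outcome :=
  match wins G with
  | (true, false) => oL
  | (true, true) => oN
  | (false, false) => oP
  | (false, true) => oR
  end.

Definition outcome_ge (o1 o2 : outcome) : Prop :=
  match o1, o2 with
  | oL, _ => True
  | oN, oN | oN, oR => True
  | oP, oP | oP, oR => True
  | oR, oR => True
  | _, _ => False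
  end.

Definition universe (U : game -> Prop) : Prop :=
  [/\ (forall G G', U G -> is_option G' G -> U G'),
      (forall G H, U G -> U H -> U (gadd G H)),
      (forall G, U G -> U (gconj G)) &
      (forall A B : seq game, A <> [::] -> B <> [::] ->
         (forall g, List.In g A -> U g) -> (forall g, List.In g B -> U g) ->
         U (Game A B))].

Definition ge_in (U : game -> Prop) (G H : game) : Prop :=
  forall X, U X -> outcome_ge (misere_outcome (gadd G X)) (misere_outcome (gadd H X)).

Definition dge (G H : game) : Prop := forall U, universe U -> ge_in U G H.
Definition deq (G H : game) : Prop := dge G H /\ dge H G.

Fixpoint left_dead_end (G : game) : bool :=
  match G with Game L R => nilp L && all left_dead_end R end.

Fixpoint height (G : game) : nat :=
  match G with
  | Game L R =>
    maxn (foldr maxn 0 (map (fun g => (height g).+1) L))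
         (foldr maxn 0 (map (fun g => (height g).+1) R))
  end.

Definition bday_witness (G : game) (n : nat) : Prop :=
  exists K, left_dead_end K /\ deq K G /\ height K = n.

Definition bday_pred (G : game) : pred nat :=
  fun n => if excluded_middle_informative (bday_witness G n) then true else false.

Lemma bday_pred_ex (G : game) :
  (exists n, bday_witness G n) -> exists n, bday_pred G n.
Proof.
case=> n Hn; exists n; rewrite /bday_pred.
by case: (excluded_middle_informative (bday_witness G n)).
Qed.

(* Birthday b(G): least height of a Left dead-end K with K = G
   (0 by convention if no such K exists; never used in that case). *)
Definition birthday (G : game) : nat :=
  match excluded_middle_informative (exists n, bday_witness G n) with
  | left e => ex_minn (bday_pred_ex e)
  | right _ => 0
  end.

From mathcomp Require Import all_boot zify.
From Stdlib Require List.
From Stdlib Require Import ClassicalEpsilon.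

(* For Left dead-ends the birthday is the height of the game tree.  Indeed,
   if K >= G are Left dead-ends then height K <= height G: otherwise Left,
   moving first, would win G + X but lose K + X for
   X = ladder (height K) (height G).+1.  Heights add under disjunctive sum
   and Left dead-ends are closed under it, so
   b(G + H) = height G + height H = b(G) + b(H). *)

Set Implicit Arguments.
Unset Strict Implicit.
Unset Printing Implicit Defensive.

Lemma allIn T (p : pred T) l : all p l <-> forall x, List.In x l -> p x.
Proof. exact: List.forallb_forall. Qed.

Lemma hasIn T (p : pred T) l : has p l <-> exists x, List.In x l /\ p x.
Proof. exact: List.existsb_exists. Qed.

Definition opts_height (l : seq game) : nat :=
  foldr maxn 0 (map (fun g => (height g).+1) l).

Lemma opts_height_cat a b :
  opts_height (a ++ b) = maxn (opts_height a) (opts_height b).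
Proof.
elim: a => [|x a IH]; first by rewrite max0n.
by rewrite /opts_height /= -!/(opts_height _) IH maxnA.
Qed.

Lemma height_Game L R : height (Game L R) = opts_height (L ++ R).
Proof. by rewrite opts_height_cat. Qed.

Lemma opts_height_In l g : List.In g l -> height g < opts_height l.
Proof.
elim: l => [|x l IH] //= [<-|/IH hg]; rewrite /opts_height /= leq_max.
  by rewrite ltnSn.
by rewrite hg orbT.
Qed.

Lemma opts_height_max l :
  0 < opts_height l -> exists2 g, List.In g l & (height g).+1 = opts_height l.
Proof.
elim: l => [|x l IH] //=; rewrite /opts_height /= -/(opts_height l) => _.
have [hx|hl] := leqP (opts_height l) (height x).+1.
  by exists x; [left | lia].
have [g gl <-] := IH (leq_ltn_trans (leq0n _) hl).
by exists g; [right | lia].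
Qed.

Lemma opts_height_map_shift (f : game -> game) c l :
  (forall x, List.In x l -> height (f x) = height x + c) ->
  opts_height (map f l) = if l is [::] then 0 else opts_height l + c.
Proof.
elim: l => [|x l IH] //= hf.
rewrite /opts_height /= -!/(opts_height _) IH => [|y yl]; last by apply: hf; right.
rewrite hf; last by left.
by case: l {IH hf} => [|y l] /=; rewrite -?[opts_height [::]]/0; lia.
Qed.

Lemma height_option g G : is_option g G -> height g < height G.
Proof. by case: G => L R /List.in_app_iff; rewrite height_Game => /opts_height_In. Qed.

Lemma game_option_ind (P : game -> Prop) :
  (forall G, (forall g, is_option g G -> P g) -> P G) -> forall G, P G.
Proof.
move=> IH G; elim: (height G).+1 {-2}G (ltnSn (height G)) => // n IHn {}G hG.
by apply: IH => g /height_option hg; apply: IHn; lia.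
Qed.

Lemma gadd_Game GL GR HL HR :
  gadd (Game GL GR) (Game HL HR) =
  Game (map (gadd^~ (Game HL HR)) GL ++ map (gadd (Game GL GR)) HL)
       (map (gadd^~ (Game HL HR)) GR ++ map (gadd (Game GL GR)) HR).
Proof. by []. Qed.

Lemma height_add G H : height (gadd G H) = height G + height H.
Proof.
elim/game_option_ind: G H => -[GL GR] IHG H.
elim/game_option_ind: H => -[HL HR] IHH.
rewrite gadd_Game height_Game !opts_height_cat maxnACA -2!opts_height_cat -!map_cat.
rewrite (opts_height_map_shift (c := height (Game HL HR))); last first.
  by move=> g /List.in_app_iff /IHG ->.
rewrite (opts_height_map_shift (c := height (Game GL GR))); last first.
  by move=> h /List.in_app_iff /IHH ->; rewrite addnC.
rewrite !height_Game.
by case: (GL ++ GR) => [|g lG]; case: (HL ++ HR) => [|h lH];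
  rewrite -?[opts_height [::]]/0; lia.
Qed.

Lemma left_dead_end_option g R :
  List.In g R -> left_dead_end (Game [::] R) -> left_dead_end g.
Proof. by move=> gR /allIn; apply. Qed.

Lemma left_dead_end_add G H :
  left_dead_end G -> left_dead_end H -> left_dead_end (gadd G H).
Proof.
elim/game_option_ind: G H => -[[|//] GR] IHG H deadG deadH.
elim/game_option_ind: H deadH => -[[|//] HR] IHH deadH.
rewrite gadd_Game /= all_cat !all_map; apply/andP; split; apply/allIn => x xR /=.
- by apply: IHG => //; [right | exact: left_dead_end_option deadG].
- by apply: IHH => //; [right | exact: left_dead_end_option deadH].
Qed.

Definition lwins (G : game) : bool := (wins G).1.
Definition rwins (G : game) : bool := (wins G).2.

Lemma lwins_Game L R : lwins (Game L R) = nilp L || has (fun g => ~~ rwins g) L.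
Proof. by []. Qed.

Lemma rwins_Game L R : rwins (Game L R) = nilp R || has (fun g => ~~ lwins g) R.
Proof. by []. Qed.

Lemma gadd_dead_end R X :
  gadd (Game [::] R) X =
  Game (map (gadd (Game [::] R)) (leftOpts X))
       (map (gadd^~ X) R ++ map (gadd (Game [::] R)) (rightOpts X)).
Proof. by case: X. Qed.

Lemma lwins_dead_add_single D X XR :
  left_dead_end D -> lwins (gadd D (Game [:: X] XR)) = ~~ rwins (gadd D X).
Proof. by case: D => -[|//] R _; rewrite gadd_dead_end lwins_Game /= orbF. Qed.

Lemma rwins_dead_add R X :
  rwins (gadd (Game [::] R) X) =
  [|| nilp (R ++ rightOpts X), has (fun g => ~~ lwins (gadd g X)) R
    | has (fun x => ~~ lwins (gadd (Game [::] R) x)) (rightOpts X)].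
Proof.
by rewrite gadd_dead_end rwins_Game has_cat !has_map /nilp !size_cat !size_map.
Qed.

Definition zero : game := Game [::] [::].

Definition intL (m : nat) : game := iter m (fun X => Game [:: X] [::]) zero.

(* In D + ladder m k, with D a Left dead-end, Left can only walk down the
   ladder and Right must answer in D: his escape to zero leaves Left without a
   move, which in misere play wins for her.  So Left, moving first, wins if D
   runs out of Right moves while the ladder lasts (height D < k), and loses
   otherwise provided height D <= m, as Right then runs out of moves before
   Left finishes the tail intL m. *)
Definition ladder (m k : nat) : game :=
  iter k.+1 (fun X => Game [:: X] [:: zero]) (intL m).

Lemma rwins_add_intL j D :
  left_dead_end D -> height D <= j -> rwins (gadd D (intL j)).
Proof.
elim: j D => [|j IH] [[|//] [|g R]] // deadD hD;
  have hg : height g < height (Game [::] (g :: R))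
    by apply: height_option; right; left.
- by lia.
- have deadg : left_dead_end g by apply: left_dead_end_option deadD; left.
  rewrite rwins_dead_add; apply/orP; right; apply/orP; left => /=.
  by rewrite lwins_dead_add_single // negbK IH //; lia.
Qed.

Lemma not_rwins_add_ladder m k D :
  left_dead_end D -> height D <= k -> ~~ rwins (gadd D (ladder m k)).
Proof.
elim: k D => [|k IH] [[|//] R] deadD hD;
  rewrite rwins_dead_add /nilp size_cat addn1 /= orbF -all_predC;
  apply/allIn => g gR /=;
  have hg : height g < height (Game [::] R) by apply: height_option; right.
- by lia.
- have deadg : left_dead_end g by apply: left_dead_end_option deadD.
  by rewrite lwins_dead_add_single // negbK IH //; lia.
Qed.

Lemma lwins_add_ladder m k D :
  left_dead_end D -> height D < k -> lwins (gadd D (ladder m k)).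
Proof.
by case: k => [//|k] deadD hD; rewrite lwins_dead_add_single // not_rwins_add_ladder.
Qed.

Lemma not_lwins_add_ladder m k D : left_dead_end D -> height D <= m ->
  k <= height D -> ~~ lwins (gadd D (ladder m k)).
Proof.
elim: k D => [|k IH] D deadD hDm hkD; rewrite lwins_dead_add_single // negbK.
  exact: rwins_add_intL.
case: D deadD hDm hkD => -[|//] R deadD; rewrite height_Game cat0s => hRm hkR.
have [g gR hg] := opts_height_max (leq_ltn_trans (leq0n k) hkR).
have deadg : left_dead_end g by apply: left_dead_end_option deadD.
rewrite rwins_dead_add; apply/orP; right; apply/orP; left.
by apply/hasIn; exists g; split => //; apply: IH => //; lia.
Qed.

Lemma universe_all : universe (fun _ => True).
Proof. by []. Qed.

Lemma outcome_ge_lwins G H :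
  outcome_ge (misere_outcome G) (misere_outcome H) -> lwins H -> lwins G.
Proof. by rewrite /misere_outcome /lwins; case: (wins G) (wins H) => [[] []] [[] []]. Qed.

Lemma dge_refl G : dge G G.
Proof. by move=> U _ X _; case: misere_outcome. Qed.

Lemma dge_dead_end_height K G : left_dead_end K -> left_dead_end G ->
  dge K G -> height K <= height G.
Proof.
move=> deadK deadG KgeG; rewrite leqNgt; apply/negP => ltGK.
have /outcome_ge_lwins := KgeG _ universe_all (ladder (height K) (height G).+1) I.
rewrite lwins_add_ladder // => /(_ isT).
by apply/negP; rewrite not_lwins_add_ladder.
Qed.

Lemma bday_predP G n : reflect (bday_witness G n) (bday_pred G n).
Proof. by rewrite /bday_pred; case: excluded_middle_informative; constructor. Qed.

Lemma birthday_min G n : bday_witness G n ->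
  (forall k, bday_witness G k -> n <= k) -> birthday G = n.
Proof.
move=> wn n_min; rewrite /birthday.
case: excluded_middle_informative => [ex|]; last by case; exists n.
case: ex_minnP => k /bday_predP wk k_min.
by apply/eqP; rewrite eqn_leq n_min // k_min //; apply/bday_predP.
Qed.

Lemma birthday_dead_end G : left_dead_end G -> birthday G = height G.
Proof.
move=> deadG; apply: birthday_min.
  by exists G; do !split=> //; apply: dge_refl.
move=> k [K [deadK [[_ GgeK] <-]]].
exact: dge_dead_end_height.
Qed.

Theorem mainTheorem13 (G H : game) :
  left_dead_end G -> left_dead_end H ->
  birthday (gadd G H) = birthday G + birthday H.
Proof.
move=> deadG deadH.
by rewrite !birthday_dead_end ?left_dead_end_add // height_add.
Qed.
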